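(* Let $\alpha\neq 0$ be real, let $\vec a$ be an arbitrary timelike vector of $\mathbb L^3$, and let $S$ be a spacelike surface in $\mathbb L^3$ invariant under the one-parameter group of rotations about a timelike axis $L$ and satisfying $$H(p)=\alpha\frac{\langle N(p),\vec a\rangle}{\langle p,\vec a\rangle}\qquad(p\in S).$$ Then either $L$ and $\vec a$ are parallel, or (up to a rigid motion taking $L$ to the $z$-axis) $S$ is the hyperbolic plane $\mathbb H^2(m)$ for some $m>0$, in which case $\vec a$ may be an arbitrary timelike vector.
   Context: $\mathbb L^3$ is $\mathbb R^3$ with the metric $\langle\cdot,\cdot\rangle=dx^2+dy^2-dz^2$. A spacelike surface has Riemannian induced metric and timelike unit normal $N$; $H$ is the trace of its second fundamental form with respect to $N$. Rotations about the timelike $z$-axis are the Euclidean rotations $(x,y,z)\mapsto(x\cos\theta-y\sin\theta,x\sin\theta+y\cos\theta,z)$; rotations about a general timelike axis are obtained by a rigid motion. The hyperbolic plane is $\mathbb H^2(m)=\{p\in\mathbb L^3:\langle p,p\rangle=-m^2,\ z>0\}$. *)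

From Stdlib Require Import Reals Lra List.
From Coquelicot Require Import Coquelicot.
Open Scope R_scope.

Record V3 := mkV3 { vx : R; vy : R; vz : R }.

Definition vadd (u v : V3) : V3 := mkV3 (vx u + vx v) (vy u + vy v) (vz u + vz v).
Definition vscale (c : R) (u : V3) : V3 := mkV3 (c * vx u) (c * vy u) (c * vz u).
Definition vsub (u v : V3) : V3 := mkV3 (vx u - vx v) (vy u - vy v) (vz u - vz v).

Definition lprod (u v : V3) : R := vx u * vx v + vy u * vy v - vz u * vz v.

Definition timelike (u : V3) : Prop := lprod u u < 0.

Definition e3 : V3 := mkV3 0 0 1.

(** Euclidean distance, used only for the (standard) topology of R^3 *)
Definition edist3 (p q : V3) : R :=
  sqrt ((vx p - vx q)^2 + (vy p - vy q)^2 + (vz p - vz q)^2).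

Definition open3 (W : V3 -> Prop) : Prop :=
  forall p, W p -> exists eps, 0 < eps /\ forall q, edist3 q p < eps -> W q.

Definition open2 (D : R -> R -> Prop) : Prop :=
  forall u v, D u v -> exists eps, 0 < eps /\
    forall u' v', Rabs (u' - u) < eps -> Rabs (v' - v) < eps -> D u' v'.

Definition connected3 (S : V3 -> Prop) : Prop :=
  forall U V : V3 -> Prop, open3 U -> open3 V ->
    (forall p, S p -> U p \/ V p) ->
    (forall p, S p -> U p -> V p -> False) ->
    (forall p, S p -> ~ U p) \/ (forall p, S p -> ~ V p).

Definition du (f : R -> R -> R) : R -> R -> R := fun u v => Derive (fun x => f x v) u.
Definition dv (f : R -> R -> R) : R -> R -> R := fun u v => Derive (fun y => f u y) v.

(** iterated partial derivative: [true] = d/du, [false] = d/dv *)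
Fixpoint dpart (l : list bool) (f : R -> R -> R) : R -> R -> R :=
  match l with
  | nil => f
  | b :: l' => if b then du (dpart l' f) else dv (dpart l' f)
  end.

Definition cont2_at (f : R -> R -> R) (u v : R) : Prop :=
  forall eps, 0 < eps -> exists delta, 0 < delta /\
    forall u' v', Rabs (u' - u) < delta -> Rabs (v' - v) < delta ->
      Rabs (f u' v' - f u v) < eps.

Definition smooth2 (D : R -> R -> Prop) (f : R -> R -> R) : Prop :=
  forall l u v, D u v ->
    cont2_at (dpart l f) u v /\
    ex_derive (fun x => dpart l f x v) u /\
    ex_derive (fun y => dpart l f u y) v.

Definition vpart (l : list bool) (X : R -> R -> V3) : R -> R -> V3 :=
  fun u v => mkV3 (dpart l (fun a b => vx (X a b)) u v)
                  (dpart l (fun a b => vy (X a b)) u v)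
                  (dpart l (fun a b => vz (X a b)) u v).

Definition Xu X := vpart (true :: nil) X.
Definition Xv X := vpart (false :: nil) X.
Definition Xuu X := vpart (true :: true :: nil) X.
Definition Xuv X := vpart (true :: false :: nil) X.
Definition Xvv X := vpart (false :: false :: nil) X.

(** Euclidean cross product (regularity = X_u, X_v linearly independent) *)
Definition ecross (u v : V3) : V3 :=
  mkV3 (vy u * vz v - vz u * vy v) (vz u * vx v - vx u * vz v) (vx u * vy v - vy u * vx v).

Definition chart (S : V3 -> Prop) (D : R -> R -> Prop) (X : R -> R -> V3) : Prop :=
  open2 D /\
  smooth2 D (fun a b => vx (X a b)) /\
  smooth2 D (fun a b => vy (X a b)) /\
  smooth2 D (fun a b => vz (X a b)) /\
  (forall u v, D u v -> S (X u v)) /\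
  (forall u v, D u v -> ecross (Xu X u v) (Xv X u v) <> mkV3 0 0 0) /\
  (forall u v u' v', D u v -> D u' v' -> X u v = X u' v' -> u = u' /\ v = v') /\
  (forall u v, D u v -> forall eps, 0 < eps -> exists delta, 0 < delta /\
     forall u' v', D u' v' -> edist3 (X u' v') (X u v) < delta ->
       Rabs (u' - u) < eps /\ Rabs (v' - v) < eps).

Definition regular_surface (S : V3 -> Prop) : Prop :=
  forall p, S p -> exists D X W, chart S D X /\ open3 W /\ W p /\
    forall q, S q -> W q -> exists u v, D u v /\ X u v = q.

Definition EE X u v := lprod (Xu X u v) (Xu X u v).
Definition FF X u v := lprod (Xu X u v) (Xv X u v).
Definition GG X u v := lprod (Xv X u v) (Xv X u v).

(** spacelike: the induced metric is Riemannian (positive definite) *)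
Definition spacelike_surface (S : V3 -> Prop) : Prop :=
  regular_surface S /\
  forall D X, chart S D X -> forall u v, D u v ->
    0 < EE X u v /\ 0 < EE X u v * GG X u v - FF X u v ^ 2.

Definition unit_timelike_normal (X : R -> R -> V3) (u v : R) (N : V3) : Prop :=
  lprod N N = -1 /\ lprod N (Xu X u v) = 0 /\ lprod N (Xv X u v) = 0.

(** H = trace (w.r.t. the induced metric) of the second fundamental form
    h_ij = <X_ij, N> with respect to the normal N *)
Definition mean_curv (X : R -> R -> V3) (u v : R) (N : V3) : R :=
  (GG X u v * lprod (Xuu X u v) N
   - 2 * FF X u v * lprod (Xuv X u v) N
   + EE X u v * lprod (Xvv X u v) N)
  / (EE X u v * GG X u v - FF X u v ^ 2).

Definition lorentz_linear (A : V3 -> V3) : Prop :=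
  (forall u w, A (vadd u w) = vadd (A u) (A w)) /\
  (forall c u, A (vscale c u) = vscale c (A u)) /\
  (forall u w, lprod (A u) (A w) = lprod u w).

Definition rigid_motion (Phi : V3 -> V3) : Prop :=
  exists A b, lorentz_linear A /\ forall p, Phi p = vadd (A p) b.

Definition rotz (theta : R) (p : V3) : V3 :=
  mkV3 (vx p * cos theta - vy p * sin theta)
       (vx p * sin theta + vy p * cos theta) (vz p).

Definition on_line (c d : V3) (p : V3) : Prop := exists t, p = vadd c (vscale t d).

Definition z_axis (p : V3) : Prop := vx p = 0 /\ vy p = 0.

Definition maps_onto (Phi : V3 -> V3) (A B : V3 -> Prop) : Prop :=
  (forall p, A p -> B (Phi p)) /\ (forall q, B q -> exists p, A p /\ Phi p = q).

(** S is invariant under the one-parameter group of rotations about the axis L: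
    the rotations about L are Phi o rotz theta o Phi^{-1}, for a rigid motion
    Phi taking the z-axis onto L. *)
Definition rot_invariant (S : V3 -> Prop) (c d : V3) : Prop :=
  exists Phi, rigid_motion Phi /\ maps_onto Phi z_axis (on_line c d) /\
    forall theta q, S (Phi q) -> S (Phi (rotz theta q)).

Definition hyperbolic_plane (m : R) (p : V3) : Prop :=
  lprod p p = - m ^ 2 /\ 0 < vz p.

Definition parallel (u w : V3) : Prop := exists lam : R, w = vscale lam u.

(* Write the rotations about L as p |-> A R_th A^-1 (p - b) + b, where p |-> A p + b is a
   rigid motion taking the z-axis onto L and R_th is the rotation about the z-axis. Rigid
   motions preserve the mean curvature, so the hypothesis makes <N, a> / <p, a> = H / alpha
   invariant under these rotations. In coordinates adapted to L, comparing the rotations by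
   PI and PI/2 shows that, unless a is parallel to L, <p, a> N = <N, a> (p - C) for the point
   C of L with <C, a> = 0. Thus p - C is a timelike normal of S, so <p - C, p - C> is negative
   with vanishing derivatives, hence constant (= -m^2) on the connected surface S. Moving C to
   the origin and undoing A, followed by a time reversal if needed (connectedness fixes the
   sign of the time coordinate), maps S into H^2(m). *)

From Stdlib Require Import Reals Lra Lia Classical.
From Coquelicot Require Import Coquelicot.
Open Scope R_scope.

Lemma V3_ext (p q : V3) : vx p = vx q -> vy p = vy q -> vz p = vz q -> p = q.
Proof. destruct p, q; simpl; intros; subst; reflexivity. Qed.

Lemma lprod_addl x y z : lprod (vadd x y) z = lprod x z + lprod y z.
Proof. unfold lprod; simpl; ring. Qed.

Lemma lprod_scalel c x z : lprod (vscale c x) z = c * lprod x z.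
Proof. unfold lprod; simpl; ring. Qed.

Lemma lprod_scaler c x z : lprod z (vscale c x) = c * lprod z x.
Proof. unfold lprod; simpl; ring. Qed.

Record M3 := mkM3 { m11 : R; m12 : R; m13 : R; m21 : R; m22 : R; m23 : R;
                    m31 : R; m32 : R; m33 : R }.

Definition mapp (M : M3) (p : V3) : V3 :=
  mkV3 (m11 M * vx p + m12 M * vy p + m13 M * vz p)
       (m21 M * vx p + m22 M * vy p + m23 M * vz p)
       (m31 M * vx p + m32 M * vy p + m33 M * vz p).

Definition mmul (M N : M3) : M3 :=
  mkM3 (m11 M * m11 N + m12 M * m21 N + m13 M * m31 N)
       (m11 M * m12 N + m12 M * m22 N + m13 M * m32 N)
       (m11 M * m13 N + m12 M * m23 N + m13 M * m33 N)
       (m21 M * m11 N + m22 M * m21 N + m23 M * m31 N)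
       (m21 M * m12 N + m22 M * m22 N + m23 M * m32 N)
       (m21 M * m13 N + m22 M * m23 N + m23 M * m33 N)
       (m31 M * m11 N + m32 M * m21 N + m33 M * m31 N)
       (m31 M * m12 N + m32 M * m22 N + m33 M * m32 N)
       (m31 M * m13 N + m32 M * m23 N + m33 M * m33 N).

Lemma mapp_mmul M N p : mapp (mmul M N) p = mapp M (mapp N p).
Proof. apply V3_ext; simpl; ring. Qed.

Lemma mapp_add M x y : mapp M (vadd x y) = vadd (mapp M x) (mapp M y).
Proof. apply V3_ext; simpl; ring. Qed.

Lemma mapp_sub M x y : mapp M (vsub x y) = vsub (mapp M x) (mapp M y).
Proof. apply V3_ext; simpl; ring. Qed.

Lemma mapp_scale M c x : mapp M (vscale c x) = vscale c (mapp M x).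
Proof. apply V3_ext; simpl; ring. Qed.

Lemma mapp_zero M : mapp M (mkV3 0 0 0) = mkV3 0 0 0.
Proof. apply V3_ext; simpl; ring. Qed.

Definition lorentz_mx (M : M3) : Prop :=
  forall x y, lprod (mapp M x) (mapp M y) = lprod x y.

Lemma lorentz_mmul M N : lorentz_mx M -> lorentz_mx N -> lorentz_mx (mmul M N).
Proof. intros HM HN x y. rewrite !mapp_mmul, HM, HN. reflexivity. Qed.

Definition e1 : V3 := mkV3 1 0 0.
Definition e2 : V3 := mkV3 0 1 0.

Lemma lorentz_linear_mx (A : V3 -> V3) :
  lorentz_linear A -> exists M, lorentz_mx M /\ forall p, A p = mapp M p.
Proof.
  intros [Hadd [Hsc Hprod]].
  set (M := mkM3 (vx (A e1)) (vx (A e2)) (vx (A e3))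
                 (vy (A e1)) (vy (A e2)) (vy (A e3))
                 (vz (A e1)) (vz (A e2)) (vz (A e3))).
  assert (HAM : forall p, A p = mapp M p).
  { intros p.
    replace p with (vadd (vadd (vscale (vx p) e1) (vscale (vy p) e2)) (vscale (vz p) e3)) at 1
      by (apply V3_ext; simpl; ring).
    rewrite !Hadd, !Hsc. apply V3_ext; simpl; ring. }
  exists M. split; [intros x y; rewrite <- !HAM; apply Hprod | exact HAM].
Qed.

Definition det3 (M : M3) : R :=
  m11 M * (m22 M * m33 M - m23 M * m32 M)
  - m12 M * (m21 M * m33 M - m23 M * m31 M)
  + m13 M * (m21 M * m32 M - m22 M * m31 M).

Definition adj (M : M3) : M3 :=
  mkM3 (m22 M * m33 M - m23 M * m32 M) (m13 M * m32 M - m12 M * m33 M)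
       (m12 M * m23 M - m13 M * m22 M)
       (m23 M * m31 M - m21 M * m33 M) (m11 M * m33 M - m13 M * m31 M)
       (m13 M * m21 M - m11 M * m23 M)
       (m21 M * m32 M - m22 M * m31 M) (m12 M * m31 M - m11 M * m32 M)
       (m11 M * m22 M - m12 M * m21 M).

Definition trmx (M : M3) : M3 :=
  mkM3 (m11 M) (m21 M) (m31 M) (m12 M) (m22 M) (m32 M) (m13 M) (m23 M) (m33 M).

Lemma mapp_adj M x : det3 M <> 0 -> mapp M (vscale (/ det3 M) (mapp (adj M) x)) = x.
Proof. intros H; unfold det3 in *; apply V3_ext; simpl; field; exact H. Qed.

Lemma ecross_mapp M x y :
  ecross (mapp M x) (mapp M y) = mapp (trmx (adj M)) (ecross x y).
Proof. apply V3_ext; simpl; ring. Qed.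

(* [J M^T J] with [J = diag(1,1,-1)]: the inverse of a Lorentz matrix. *)
Definition ladj (M : M3) : M3 :=
  mkM3 (m11 M) (m21 M) (- m31 M)
       (m12 M) (m22 M) (- m32 M)
       (- m13 M) (- m23 M) (m33 M).

Lemma mapp_ladj_mapp M x :
  mapp (ladj M) (mapp M x) =
  mkV3 (lprod (mapp M e1) (mapp M x)) (lprod (mapp M e2) (mapp M x))
       (- lprod (mapp M e3) (mapp M x)).
Proof. apply V3_ext; unfold lprod; simpl; ring. Qed.

Lemma ladjK M : lorentz_mx M -> forall x, mapp (ladj M) (mapp M x) = x.
Proof. intros HM x. rewrite mapp_ladj_mapp, !HM. apply V3_ext; unfold lprod; simpl; ring. Qed.

Lemma lorentz_det_neq0 M : lorentz_mx M -> det3 M <> 0.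
Proof.
  intros HM E.
  set (g := fun x y => lprod (mapp M x) (mapp M y)).
  (* the Gram determinant of [M] for the Lorentz product is [det J * det M ^ 2] *)
  assert (Gram : g e1 e1 * (g e2 e2 * g e3 e3 - g e2 e3 * g e3 e2)
               - g e1 e2 * (g e2 e1 * g e3 e3 - g e2 e3 * g e3 e1)
               + g e1 e3 * (g e2 e1 * g e3 e2 - g e2 e2 * g e3 e1) = - det3 M ^ 2).
  { unfold g, lprod, det3; simpl; ring. }
  unfold g in Gram; rewrite !HM, E in Gram. unfold lprod in Gram; simpl in Gram. lra.
Qed.

Lemma mapp_ladjK M : lorentz_mx M -> forall x, mapp M (mapp (ladj M) x) = x.
Proof.
  intros HM x.
  rewrite <- (mapp_adj M x (lorentz_det_neq0 M HM)) at 1.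
  rewrite ladjK by exact HM. apply mapp_adj, lorentz_det_neq0, HM.
Qed.

Lemma lorentz_ladj M : lorentz_mx M -> lorentz_mx (ladj M).
Proof. intros HM x y. rewrite <- HM, !mapp_ladjK by exact HM. reflexivity. Qed.

Lemma lprod_mapp_ladj M : lorentz_mx M ->
  forall x y, lprod (mapp M x) y = lprod x (mapp (ladj M) y).
Proof. intros HM x y. rewrite <- (HM x), mapp_ladjK by exact HM. reflexivity. Qed.

Definition Rz (t : R) : M3 := mkM3 (cos t) (- sin t) 0 (sin t) (cos t) 0 0 0 1.

Lemma rotz_Rz t p : rotz t p = mapp (Rz t) p.
Proof. apply V3_ext; unfold rotz; simpl; ring. Qed.

Lemma lorentz_Rz t : lorentz_mx (Rz t).
Proof.
  intros x y. unfold lprod; simpl.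
  transitivity ((sin t ^ 2 + cos t ^ 2) * (vx x * vx y + vy x * vy y) - vz x * vz y); [ring|].
  rewrite <- !Rsqr_pow2, sin2_cos2. ring.
Qed.

Lemma Rz_PI q : mapp (Rz PI) q = mkV3 (- vx q) (- vy q) (vz q).
Proof. unfold mapp, Rz; rewrite cos_PI, sin_PI; apply V3_ext; simpl; ring. Qed.

Lemma Rz_PI2 q : mapp (Rz (PI / 2)) q = mkV3 (- vy q) (vx q) (vz q).
Proof. unfold mapp, Rz; rewrite cos_PI2, sin_PI2; apply V3_ext; simpl; ring. Qed.

Definition time_flip (s : R) : M3 := mkM3 1 0 0 0 1 0 0 0 s.

Lemma lorentz_time_flip s : s * s = 1 -> lorentz_mx (time_flip s).
Proof.
  intros Hs x y; unfold lprod; simpl.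
  transitivity (vx x * vx y + vy x * vy y - (s * s) * vz x * vz y); [ring|].
  rewrite Hs; ring.
Qed.

Lemma time_flipK s : s * s = 1 -> forall x, mapp (time_flip s) (mapp (time_flip s) x) = x.
Proof.
  intros Hs x; apply V3_ext; simpl; try ring.
  transitivity ((s * s) * vz x); [ring|]. rewrite Hs; ring.
Qed.

Lemma cont2_at_continuity_2d_pt f u v : cont2_at f u v <-> continuity_2d_pt f u v.
Proof.
  split.
  - intros H eps. destruct (H eps (cond_pos eps)) as [d [Hd Hf]].
    exists (mkposreal d Hd). exact Hf.
  - intros H eps Heps. destruct (H (mkposreal eps Heps)) as [d Hf].
    exists d. split; [apply cond_pos | exact Hf].
Qed.

Lemma open2_locally_2d (D P : R -> R -> Prop) u v :
  open2 D -> D u v -> (forall u' v', D u' v' -> P u' v') -> locally_2d P u v.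
Proof.
  intros HD Huv HP. destruct (HD u v Huv) as [e [He HE]].
  exists (mkposreal e He). intros u' v' Hu Hv. apply HP, HE; assumption.
Qed.

Definition lincomb (c1 c2 c3 c0 : R) (f1 f2 f3 : R -> R -> R) : R -> R -> R :=
  fun a b => c1 * f1 a b + c2 * f2 a b + c3 * f3 a b + c0.

Lemma is_derive_lincomb_loc (g h1 h2 h3 : R -> R) x c1 c2 c3 c0 :
  locally x (fun y => c1 * h1 y + c2 * h2 y + c3 * h3 y + c0 = g y) ->
  ex_derive h1 x -> ex_derive h2 x -> ex_derive h3 x ->
  is_derive g x (c1 * Derive h1 x + c2 * Derive h2 x + c3 * Derive h3 x).
Proof.
  intros Hg H1 H2 H3.
  apply (is_derive_ext_loc _ _ _ _ Hg).
  auto_derive; [repeat split; assumption|]. rewrite !Rmult_1_l; reflexivity.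
Qed.

Section Lincomb.

Variables (D : R -> R -> Prop) (f1 f2 f3 : R -> R -> R) (c1 c2 c3 c0 : R).
Hypotheses (HD : open2 D) (H1 : smooth2 D f1) (H2 : smooth2 D f2) (H3 : smooth2 D f3).

Let F := lincomb c1 c2 c3 c0 f1 f2 f3.

Let cst (l : list bool) : R := match l with nil => c0 | _ => 0 end.

Lemma dpart_lincomb l u v : D u v ->
  dpart l F u v = lincomb c1 c2 c3 (cst l) (dpart l f1) (dpart l f2) (dpart l f3) u v.
Proof.
  revert u v; induction l as [|b l IH]; intros u v Huv; [reflexivity|].
  assert (Hloc : locally_2d (fun u' v' =>
            lincomb c1 c2 c3 (cst l) (dpart l f1) (dpart l f2) (dpart l f3) u' v'
            = dpart l F u' v') u v)
    by (apply (open2_locally_2d D); auto; intros; symmetry; auto).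
  destruct b; simpl; unfold lincomb, du, dv; rewrite Rplus_0_r; apply is_derive_unique;
    apply is_derive_lincomb_loc with (c0 := cst l).
  - exact (locally_2d_1d_const_y _ _ _ Hloc).
  - apply (H1 l u v Huv).
  - apply (H2 l u v Huv).
  - apply (H3 l u v Huv).
  - exact (locally_2d_1d_const_x _ _ _ Hloc).
  - apply (H1 l u v Huv).
  - apply (H2 l u v Huv).
  - apply (H3 l u v Huv).
Qed.

Lemma dpart_lincomb_near l u v : D u v ->
  locally_2d (fun u' v' =>
    lincomb c1 c2 c3 (cst l) (dpart l f1) (dpart l f2) (dpart l f3) u' v' = dpart l F u' v') u v.
Proof.
  intros Huv. apply (open2_locally_2d D); auto.
  intros; symmetry; apply dpart_lincomb; assumption.
Qed.

Lemma smooth2_lincomb : smooth2 D F.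
Proof.
  intros l u v Huv. assert (Hloc := dpart_lincomb_near l u v Huv).
  split; [|split].
  - apply cont2_at_continuity_2d_pt, (continuity_2d_pt_ext_loc _ _ _ _ Hloc).
    unfold lincomb.
    repeat apply continuity_2d_pt_plus;
      try apply continuity_2d_pt_mult; try apply continuity_2d_pt_const;
      apply cont2_at_continuity_2d_pt; [apply H1 | apply H2 | apply H3]; exact Huv.
  - eexists; apply is_derive_lincomb_loc with (c0 := cst l).
    + exact (locally_2d_1d_const_y _ _ _ Hloc).
    + apply (H1 l u v Huv).
    + apply (H2 l u v Huv).
    + apply (H3 l u v Huv).
  - eexists; apply is_derive_lincomb_loc with (c0 := cst l).
    + exact (locally_2d_1d_const_x _ _ _ Hloc).
    + apply (H1 l u v Huv).
    + apply (H2 l u v Huv).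
    + apply (H3 l u v Huv).
Qed.

End Lincomb.

Lemma edist3_ge_coords p q :
  Rabs (vx p - vx q) <= edist3 p q /\ Rabs (vy p - vy q) <= edist3 p q /\
  Rabs (vz p - vz q) <= edist3 p q.
Proof.
  unfold edist3.
  pose proof (pow2_ge_0 (vx p - vx q)); pose proof (pow2_ge_0 (vy p - vy q));
  pose proof (pow2_ge_0 (vz p - vz q)).
  repeat split; rewrite <- sqrt_Rsqr_abs; apply sqrt_le_1_alt; unfold Rsqr; lra.
Qed.

Lemma edist3_le_sum p q :
  edist3 p q <= Rabs (vx p - vx q) + Rabs (vy p - vy q) + Rabs (vz p - vz q).
Proof.
  unfold edist3.
  set (x := vx p - vx q); set (y := vy p - vy q); set (z := vz p - vz q).
  pose proof (Rabs_pos x); pose proof (Rabs_pos y); pose proof (Rabs_pos z).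
  rewrite <- (sqrt_pow2 (Rabs x + Rabs y + Rabs z)) by lra.
  apply sqrt_le_1_alt. rewrite <- (pow2_abs x), <- (pow2_abs y), <- (pow2_abs z). nra.
Qed.

Lemma edist3_triangle p q r : edist3 p r <= edist3 p q + edist3 q r.
Proof.
  unfold edist3.
  set (x1 := vx p - vx q); set (y1 := vy p - vy q); set (z1 := vz p - vz q).
  set (x2 := vx q - vx r); set (y2 := vy q - vy r); set (z2 := vz q - vz r).
  replace (vx p - vx r) with (x1 + x2) by (unfold x1, x2; ring).
  replace (vy p - vy r) with (y1 + y2) by (unfold y1, y2; ring).
  replace (vz p - vz r) with (z1 + z2) by (unfold z1, z2; ring).
  set (N1 := x1 ^ 2 + y1 ^ 2 + z1 ^ 2); set (N2 := x2 ^ 2 + y2 ^ 2 + z2 ^ 2).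
  assert (H1 : 0 <= N1) by (unfold N1; nra). assert (H2 : 0 <= N2) by (unfold N2; nra).
  pose proof (sqrt_pos N1); pose proof (sqrt_pos N2).
  rewrite <- (sqrt_pow2 (sqrt N1 + sqrt N2)) by lra.
  apply sqrt_le_1_alt.
  set (s := x1 * x2 + y1 * y2 + z1 * z2).
  assert (Lagrange : N1 * N2 - s ^ 2
            = (x1 * y2 - y1 * x2) ^ 2 + (y1 * z2 - z1 * y2) ^ 2 + (z1 * x2 - x1 * z2) ^ 2)
    by (unfold N1, N2, s; ring).
  assert (CS : s <= sqrt N1 * sqrt N2).
  { rewrite <- sqrt_mult by assumption.
    apply (Rle_trans _ (Rabs s)); [apply Rle_abs|].
    rewrite <- sqrt_Rsqr_abs. apply sqrt_le_1_alt. unfold Rsqr.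
    pose proof (pow2_ge_0 (x1 * y2 - y1 * x2)); pose proof (pow2_ge_0 (y1 * z2 - z1 * y2));
    pose proof (pow2_ge_0 (z1 * x2 - x1 * z2)). nra. }
  assert (E1 := sqrt_sqrt N1 H1). assert (E2 := sqrt_sqrt N2 H2).
  unfold N1, N2, s in *. nra.
Qed.

Lemma edist3_vadd_r p q t : edist3 (vadd p t) (vadd q t) = edist3 p q.
Proof. unfold edist3; simpl; f_equal; ring. Qed.

Lemma edist3_vsub_r p q t : edist3 (vsub p t) (vsub q t) = edist3 p q.
Proof. unfold edist3; simpl; f_equal; ring. Qed.

Lemma Rabs_lincomb3_le a b c x y z e :
  Rabs x <= e -> Rabs y <= e -> Rabs z <= e ->
  Rabs (a * x + b * y + c * z) <= (Rabs a + Rabs b + Rabs c) * e.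
Proof.
  intros Hx Hy Hz.
  eapply Rle_trans; [eapply Rle_trans; [apply Rabs_triang | apply Rplus_le_compat_r, Rabs_triang]|].
  rewrite !Rabs_mult.
  pose proof (Rmult_le_compat_l _ _ _ (Rabs_pos a) Hx).
  pose proof (Rmult_le_compat_l _ _ _ (Rabs_pos b) Hy).
  pose proof (Rmult_le_compat_l _ _ _ (Rabs_pos c) Hz). lra.
Qed.

(* the [+ 1] makes it positive *)
Definition mx_bound (M : M3) : R :=
  Rabs (m11 M) + Rabs (m12 M) + Rabs (m13 M) + Rabs (m21 M) + Rabs (m22 M)
  + Rabs (m23 M) + Rabs (m31 M) + Rabs (m32 M) + Rabs (m33 M) + 1.

Lemma mx_bound_gt0 M : 0 < mx_bound M.
Proof.
  unfold mx_bound.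
  pose proof (Rabs_pos (m11 M)); pose proof (Rabs_pos (m12 M)); pose proof (Rabs_pos (m13 M));
  pose proof (Rabs_pos (m21 M)); pose proof (Rabs_pos (m22 M)); pose proof (Rabs_pos (m23 M));
  pose proof (Rabs_pos (m31 M)); pose proof (Rabs_pos (m32 M)); pose proof (Rabs_pos (m33 M)).
  lra.
Qed.

Lemma edist3_mapp M p q : edist3 (mapp M p) (mapp M q) <= mx_bound M * edist3 p q.
Proof.
  eapply Rle_trans; [apply edist3_le_sum|].
  destruct (edist3_ge_coords p q) as [Hx [Hy Hz]].
  assert (He : 0 <= edist3 p q) by (unfold edist3; apply sqrt_pos).
  simpl.
  replace (m11 M * vx p + m12 M * vy p + m13 M * vz p - (m11 M * vx q + m12 M * vy q + m13 M * vz q))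
    with (m11 M * (vx p - vx q) + m12 M * (vy p - vy q) + m13 M * (vz p - vz q)) by ring.
  replace (m21 M * vx p + m22 M * vy p + m23 M * vz p - (m21 M * vx q + m22 M * vy q + m23 M * vz q))
    with (m21 M * (vx p - vx q) + m22 M * (vy p - vy q) + m23 M * (vz p - vz q)) by ring.
  replace (m31 M * vx p + m32 M * vy p + m33 M * vz p - (m31 M * vx q + m32 M * vy q + m33 M * vz q))
    with (m31 M * (vx p - vx q) + m32 M * (vy p - vy q) + m33 M * (vz p - vz q)) by ring.
  pose proof (Rabs_lincomb3_le (m11 M) (m12 M) (m13 M) _ _ _ _ Hx Hy Hz).
  pose proof (Rabs_lincomb3_le (m21 M) (m22 M) (m23 M) _ _ _ _ Hx Hy Hz).
  pose proof (Rabs_lincomb3_le (m31 M) (m32 M) (m33 M) _ _ _ _ Hx Hy Hz).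
  unfold mx_bound. nra.
Qed.

Lemma open3_and (U V : V3 -> Prop) : open3 U -> open3 V -> open3 (fun x => U x /\ V x).
Proof.
  intros HU HV p [Up Vp].
  destruct (HU p Up) as [e1 [He1 H1]]; destruct (HV p Vp) as [e2 [He2 H2]].
  exists (Rmin e1 e2); split; [apply Rmin_pos; assumption|].
  intros q Hq; split; [apply H1 | apply H2];
    eapply Rlt_le_trans; eauto; [apply Rmin_l | apply Rmin_r].
Qed.

Lemma open3_ball p r : open3 (fun q => edist3 q p < r).
Proof.
  intros q Hq. exists (r - edist3 q p); split; [lra|].
  intros q' Hq'. pose proof (edist3_triangle q' q p). lra.
Qed.

Lemma open3_lipschitz_pos (g : V3 -> R) K : 0 < K ->
  (forall p q, Rabs (g q - g p) <= K * edist3 q p) -> open3 (fun x => 0 < g x).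
Proof.
  intros HK Hg p Hp. exists (g p / K); split; [apply Rdiv_lt_0_compat; assumption|].
  intros q Hq.
  assert (K * edist3 q p < g p)
    by (apply (Rmult_lt_compat_l K) in Hq; [|assumption]; field_simplify in Hq; lra).
  pose proof (Hg p q) as Hpq. pose proof (Rle_abs (g p - g q)).
  rewrite Rabs_minus_sym in Hpq. lra.
Qed.

Lemma chart_in_S S D X u v : chart S D X -> D u v -> S (X u v).
Proof. intros [_ [_ [_ [_ [HXS _]]]]] Huv. exact (HXS u v Huv). Qed.

Definition aff (M : M3) (t : V3) (X : R -> R -> V3) : R -> R -> V3 :=
  fun a b => vadd (mapp M (X a b)) t.

Section AffineChart.

Variables (S : V3 -> Prop) (D : R -> R -> Prop) (X : R -> R -> V3) (M : M3) (t : V3).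
Hypothesis HX : chart S D X.

Lemma aff_coords :
  (fun a b => vx (aff M t X a b)) = lincomb (m11 M) (m12 M) (m13 M) (vx t)
     (fun a b => vx (X a b)) (fun a b => vy (X a b)) (fun a b => vz (X a b)) /\
  (fun a b => vy (aff M t X a b)) = lincomb (m21 M) (m22 M) (m23 M) (vy t)
     (fun a b => vx (X a b)) (fun a b => vy (X a b)) (fun a b => vz (X a b)) /\
  (fun a b => vz (aff M t X a b)) = lincomb (m31 M) (m32 M) (m33 M) (vz t)
     (fun a b => vx (X a b)) (fun a b => vy (X a b)) (fun a b => vz (X a b)).
Proof. repeat split. Qed.

Lemma vpart_aff l u v : D u v -> l <> nil ->
  vpart l (aff M t X) u v = mapp M (vpart l X u v).
Proof.
  intros Huv Hl. destruct HX as [HD [Hx [Hy [Hz _]]]].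
  destruct aff_coords as [Ex [Ey Ez]].
  unfold vpart. rewrite Ex, Ey, Ez, !(dpart_lincomb D) by assumption.
  destruct l; [congruence|]. apply V3_ext; unfold lincomb; simpl; ring.
Qed.

Lemma chart_aff M' : (forall x, mapp M' (mapp M x) = x) ->
  (forall p, S p -> S (vadd (mapp M p) t)) -> chart S D (aff M t X).
Proof.
  intros HMK HSM.
  pose proof HX as [HD [Hx [Hy [Hz [HXS [Hreg [Hinj Hhom]]]]]]].
  assert (Hcancel : forall p q, vadd (mapp M p) t = vadd (mapp M q) t -> p = q).
  { intros p q E. rewrite <- (HMK p), <- (HMK q). f_equal.
    apply V3_ext; [apply (f_equal vx) in E | apply (f_equal vy) in E | apply (f_equal vz) in E];
      simpl in E |- *; lra. }
  destruct aff_coords as [Ex [Ey Ez]].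
  split; [assumption|]. rewrite Ex, Ey, Ez.
  do 3 (split; [apply smooth2_lincomb; assumption|]).
  split; [|split; [|split]].
  - intros u v Huv. apply HSM, HXS, Huv.
  - intros u v Huv E. apply (Hreg u v Huv).
    unfold Xu, Xv in *. rewrite !vpart_aff in E by (auto; discriminate).
    rewrite <- (HMK (vpart _ X u v)), <- (HMK (vpart (false :: nil) X u v)).
    rewrite ecross_mapp, E, mapp_zero. reflexivity.
  - intros u v u' v' H1 H2 E. apply Hinj, Hcancel; assumption.
  - intros u v Huv eps Heps.
    destruct (Hhom u v Huv eps Heps) as [d [Hd Hdd]].
    pose proof (mx_bound_gt0 M').
    exists (d / mx_bound M'). split; [apply Rdiv_lt_0_compat; assumption|].
    intros u' v' H' Hdist. apply Hdd; [assumption|].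
    unfold aff in Hdist. rewrite edist3_vadd_r in Hdist.
    rewrite <- (HMK (X u' v')), <- (HMK (X u v)).
    eapply Rle_lt_trans; [apply edist3_mapp|].
    apply (Rmult_lt_compat_l (mx_bound M')) in Hdist; [|assumption].
    field_simplify in Hdist; lra.
Qed.

Hypothesis HM : lorentz_mx M.

Lemma mean_curv_aff u v N : D u v ->
  mean_curv (aff M t X) u v (mapp M N) = mean_curv X u v N.
Proof.
  intros Huv. unfold mean_curv, EE, FF, GG, Xu, Xv, Xuu, Xuv, Xvv.
  rewrite !vpart_aff by (auto; discriminate). rewrite !HM. reflexivity.
Qed.

Lemma unit_timelike_normal_aff u v N : D u v ->
  unit_timelike_normal X u v N -> unit_timelike_normal (aff M t X) u v (mapp M N).
Proof.
  intros Huv. unfold unit_timelike_normal, Xu, Xv.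
  rewrite !vpart_aff by (auto; discriminate). rewrite !HM. tauto.
Qed.

End AffineChart.

Definition lcross (x y : V3) : V3 :=
  mkV3 (vy x * vz y - vz x * vy y) (vz x * vx y - vx x * vz y) (vy x * vx y - vx x * vy y).

Lemma unit_timelike_normal_exists S D X u v : spacelike_surface S -> chart S D X -> D u v ->
  exists N, unit_timelike_normal X u v N.
Proof.
  intros [_ HS] HX Huv.
  destruct (HS D X HX u v Huv) as [_ Hg].
  unfold EE, FF, GG in Hg. unfold unit_timelike_normal.
  set (x := Xu X u v) in *; set (y := Xv X u v) in *.
  set (g := lprod x x * lprod y y - lprod x y ^ 2) in *.
  exists (vscale (/ sqrt g) (lcross x y)).
  rewrite !lprod_scalel, !lprod_scaler.
  replace (lprod (lcross x y) (lcross x y)) with (- g) by (unfold g, lprod; simpl; ring).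
  replace (lprod (lcross x y) x) with 0 by (unfold lprod; simpl; ring).
  replace (lprod (lcross x y) y) with 0 by (unfold lprod; simpl; ring).
  split; [|split; ring].
  assert (Hs := sqrt_sqrt g (Rlt_le _ _ Hg)). assert (Hs0 := sqrt_lt_R0 g Hg).
  replace (/ sqrt g * (/ sqrt g * - g)) with (- (g / (sqrt g * sqrt g))) by (field; lra).
  rewrite Hs. field. lra.
Qed.

Definition ldist2 (C p : V3) : R := lprod (vsub p C) (vsub p C).

Lemma is_derive_ldist2 (g : R -> V3) C x :
  ex_derive (fun y => vx (g y)) x -> ex_derive (fun y => vy (g y)) x ->
  ex_derive (fun y => vz (g y)) x ->
  is_derive (fun y => ldist2 C (g y)) x
    (2 * lprod (vsub (g x) C) (mkV3 (Derive (fun y => vx (g y)) x)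
                                    (Derive (fun y => vy (g y)) x) (Derive (fun y => vz (g y)) x))).
Proof.
  intros Hx Hy Hz.
  set (f1 := fun y => vx (g y)) in *; set (f2 := fun y => vy (g y)) in *;
    set (f3 := fun y => vz (g y)) in *.
  change (fun y => ldist2 C (g y)) with (fun y =>
    (f1 y - vx C) * (f1 y - vx C) + (f2 y - vy C) * (f2 y - vy C) - (f3 y - vz C) * (f3 y - vz C)).
  auto_derive; [repeat split; assumption|].
  change (fun x0 : R => f1 x0) with f1; change (fun x0 : R => f2 x0) with f2;
    change (fun x0 : R => f3 x0) with f3.
  unfold lprod, f1, f2, f3; simpl; ring.
Qed.

Lemma Xu_Derive X u v : Xu X u v =
  mkV3 (Derive (fun x => vx (X x v)) u) (Derive (fun x => vy (X x v)) u)
       (Derive (fun x => vz (X x v)) u).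
Proof. reflexivity. Qed.

Lemma Xv_Derive X u v : Xv X u v =
  mkV3 (Derive (fun y => vx (X u y)) v) (Derive (fun y => vy (X u y)) v)
       (Derive (fun y => vz (X u y)) v).
Proof. reflexivity. Qed.

Lemma is_derive_0_eq (g : R -> R) a b :
  (forall x, Rmin a b <= x <= Rmax a b -> is_derive g x 0) -> g b = g a.
Proof.
  intros H. destruct (Rtotal_order a b) as [Hab | [<- | Hab]]; [| reflexivity |].
  - symmetry; apply eq_is_derive; [|assumption].
    intros t Ht; apply H; rewrite Rmin_left, Rmax_right; lra.
  - apply eq_is_derive; [|assumption].
    intros t Ht; apply H; rewrite Rmin_right, Rmax_left; lra.
Qed.

Lemma Rabs_between a b x eps :
  Rabs (b - a) < eps -> Rmin a b <= x <= Rmax a b -> Rabs (x - a) < eps.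
Proof.
  intros H Hx. apply Rabs_def2 in H. destruct H.
  unfold Rmin, Rmax in Hx. apply Rabs_def1; destruct (Rle_dec a b); lra.
Qed.

Section RadialSurface.

Variables (S : V3 -> Prop) (C : V3).
Hypothesis Horth : forall D X u v, chart S D X -> D u v ->
  lprod (vsub (X u v) C) (Xu X u v) = 0 /\ lprod (vsub (X u v) C) (Xv X u v) = 0.

Lemma ldist2_chart_square D X u0 v0 eps : chart S D X ->
  (forall u v, Rabs (u - u0) < eps -> Rabs (v - v0) < eps -> D u v) ->
  forall u v, Rabs (u - u0) < eps -> Rabs (v - v0) < eps ->
  ldist2 C (X u v) = ldist2 C (X u0 v0).
Proof.
  intros HX Hsq u v Hu Hv.
  pose proof HX as [_ [Sx [Sy [Sz _]]]].
  assert (Heps : 0 < eps) by (pose proof (Rabs_pos (v - v0)); lra).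
  assert (Hc : Rabs (v0 - v0) < eps) by (rewrite Rminus_diag, Rabs_R0; exact Heps).
  transitivity (ldist2 C (X u v0)).
  - apply (is_derive_0_eq (fun y => ldist2 C (X u y))).
    intros y Hy. assert (Duy : D u y) by (apply Hsq; [|apply (Rabs_between v0 v)]; assumption).
    replace 0 with (2 * lprod (vsub (X u y) C) (Xv X u y))
      by (rewrite (proj2 (Horth D X u y HX Duy)); ring).
    rewrite Xv_Derive. apply (is_derive_ldist2 (fun y => X u y));
      [exact (proj2 (proj2 (Sx nil u y Duy))) | exact (proj2 (proj2 (Sy nil u y Duy)))
      | exact (proj2 (proj2 (Sz nil u y Duy)))].
  - apply (is_derive_0_eq (fun x => ldist2 C (X x v0))).
    intros x Hx. assert (Dxv : D x v0) by (apply Hsq; [apply (Rabs_between u0 u)|]; assumption).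
    replace 0 with (2 * lprod (vsub (X x v0) C) (Xu X x v0))
      by (rewrite (proj1 (Horth D X x v0 HX Dxv)); ring).
    rewrite Xu_Derive. apply (is_derive_ldist2 (fun x => X x v0));
      [exact (proj1 (proj2 (Sx nil x v0 Dxv))) | exact (proj1 (proj2 (Sy nil x v0 Dxv)))
      | exact (proj1 (proj2 (Sz nil x v0 Dxv)))].
Qed.

Lemma ldist2_locally_const : regular_surface S ->
  forall p, S p -> exists W, open3 W /\ W p /\ forall q, S q -> W q -> ldist2 C q = ldist2 C p.
Proof.
  intros Hreg p Sp.
  destruct (Hreg p Sp) as [D [X [W [HX [HW [Wp Hcov]]]]]].
  destruct (Hcov p Sp Wp) as [u0 [v0 [D0 <-]]].
  pose proof HX as [HD [_ [_ [_ [_ [_ [_ Hhom]]]]]]].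
  destruct (HD u0 v0 D0) as [eps [Heps Hsq]].
  destruct (Hhom u0 v0 D0 eps Heps) as [d [Hd Hdd]].
  exists (fun q => W q /\ edist3 q (X u0 v0) < d).
  split; [|split].
  - apply open3_and; [assumption | apply open3_ball].
  - split; [assumption|]. unfold edist3. rewrite !Rminus_diag, pow_i, !Rplus_0_r, sqrt_0 by lia.
    exact Hd.
  - intros q Sq [Wq Hq].
    destruct (Hcov q Sq Wq) as [u [v [Duv <-]]].
    destruct (Hdd u v Duv Hq) as [Hu Hv].
    apply (ldist2_chart_square D X u0 v0 eps); assumption.
Qed.

End RadialSurface.

Lemma connected3_locally_const (S : V3 -> Prop) (g : V3 -> R) : connected3 S ->
  (forall p, S p -> exists W, open3 W /\ W p /\ forall q, S q -> W q -> g q = g p) ->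
  forall p q, S p -> S q -> g q = g p.
Proof.
  intros Hconn Hloc p0 q0 Sp0 Sq0.
  set (near := fun (P : R -> Prop) x => exists p W, S p /\ P (g p) /\ open3 W /\ W p /\
              (forall q, S q -> W q -> g q = g p) /\ W x).
  set (U := near (fun r => r = g p0)); set (V := near (fun r => r <> g p0)).
  assert (Hopen : forall P, open3 (near P)).
  { intros P x [p [W [Sp [Hg [HW [Wp [HWq Wx]]]]]]].
    destruct (HW x Wx) as [e [He Hx]]. exists e; split; [assumption|].
    intros q Hq. exists p, W; repeat split; auto. }
  destruct (Hconn U V (Hopen _) (Hopen _)) as [HU | HV].
  - intros p Sp. destruct (Hloc p Sp) as [W [HW [Wp HWq]]].
    destruct (Req_dec (g p) (g p0)); [left | right]; exists p, W; repeat split; auto.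
  - intros p Sp [p1 [W1 [_ [G1 [_ [_ [Hq1 W1p]]]]]]] [p2 [W2 [_ [G2 [_ [_ [Hq2 W2p]]]]]]].
    apply G2. rewrite <- (Hq2 p Sp W2p), (Hq1 p Sp W1p). exact G1.
  - exfalso. apply (HU p0 Sp0). destruct (Hloc p0 Sp0) as [W [HW [Wp HWq]]].
    exists p0, W; repeat split; auto.
  - destruct (Req_dec (g q0) (g p0)) as [E | NE]; [exact E|].
    exfalso. apply (HV q0 Sq0). destruct (Hloc q0 Sq0) as [W [HW [Wp HWq]]].
    exists q0, W; repeat split; auto.
Qed.

Lemma connected3_sign (S : V3 -> Prop) (g : V3 -> R) K : connected3 S -> 0 < K ->
  (forall p q, Rabs (g q - g p) <= K * edist3 q p) -> (forall p, S p -> g p <> 0) ->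
  exists s, s * s = 1 /\ forall p, S p -> 0 < s * g p.
Proof.
  intros Hconn HK Hg Hg0.
  assert (Hopen : forall s, Rabs s = 1 -> open3 (fun x => 0 < s * g x)).
  { intros s Hs. apply (open3_lipschitz_pos _ K HK).
    intros p q. rewrite <- Rmult_minus_distr_l, Rabs_mult, Hs, Rmult_1_l. apply Hg. }
  destruct (Hconn (fun x => 0 < 1 * g x) (fun x => 0 < -1 * g x)) as [HU | HV].
  - apply Hopen, Rabs_R1.
  - apply Hopen. rewrite Rabs_left by lra. ring.
  - intros p Sp. pose proof (Hg0 p Sp). destruct (Rlt_le_dec 0 (g p)); [left | right]; lra.
  - intros p _ H1 H2. lra.
  - exists (-1). split; [ring|]. intros p Sp. pose proof (HU p Sp). pose proof (Hg0 p Sp). lra.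
  - exists 1. split; [ring|]. intros p Sp. pose proof (HV p Sp). pose proof (Hg0 p Sp). lra.
Qed.

Lemma rot_invariant_ratio_radial n q a be :
  0 < vx a ^ 2 + vy a ^ 2 -> vz a <> 0 ->
  (forall th, lprod n a * (lprod (mapp (Rz th) q) a + be) =
              lprod (mapp (Rz th) n) a * (lprod q a + be)) ->
  vscale (lprod q a + be) n = vscale (lprod n a) (vsub q (vscale (be / vz a) e3)).
Proof.
  intros Ha Ha3 Hrot.
  pose proof (Hrot PI) as Epi; pose proof (Hrot (PI / 2)) as Epi2.
  rewrite !Rz_PI in Epi; rewrite !Rz_PI2 in Epi2.
  destruct n as [n1 n2 n3], q as [q1 q2 q3], a as [a1 a2 a3]; unfold lprod in *; simpl in *.
  set (K := n1 * a1 + n2 * a2 - n3 * a3) in *.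
  set (P := q1 * a1 + q2 * a2 - q3 * a3 + be) in *.
  (* F1, F2: half-sum and half-difference of [Epi] and [K * P = K * P]; F3: [Epi2] minus F1 *)
  assert (F1 : K * (be - q3 * a3) + n3 * a3 * P = 0) by (unfold K, P in *; lra).
  assert (F2 : K * (q1 * a1 + q2 * a2) - (n1 * a1 + n2 * a2) * P = 0) by (unfold K, P in *; lra).
  assert (F3 : K * (q1 * a2 - q2 * a1) - (n1 * a2 - n2 * a1) * P = 0) by (unfold K, P in *; lra).
  set (ux := P * n1 - K * q1); set (uy := P * n2 - K * q2).
  assert (G : (ux ^ 2 + uy ^ 2) * (a1 ^ 2 + a2 ^ 2) = 0).
  { transitivity ((ux * a1 + uy * a2) ^ 2 + (ux * a2 - uy * a1) ^ 2); [ring|].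
    replace (ux * a1 + uy * a2) with 0 by (unfold ux, uy; lra).
    replace (ux * a2 - uy * a1) with 0 by (unfold ux, uy; lra). ring. }
  apply Rmult_integral in G as [G | G]; [|lra].
  assert (ux = 0) by nra. assert (uy = 0) by nra.
  apply V3_ext; simpl; unfold ux, uy in *; [lra | lra |].
  apply (Rmult_eq_reg_r a3); [|assumption].
  field_simplify; [lra | assumption].
Qed.

Definition rot_mx (A : M3) (th : R) : M3 := mmul A (mmul (Rz th) (ladj A)).
Definition rot_shift (A : M3) (b : V3) (th : R) : V3 := vsub b (mapp (rot_mx A th) b).

Lemma lorentz_rot_mx A th : lorentz_mx A -> lorentz_mx (rot_mx A th).
Proof.
  intros HA. apply lorentz_mmul; [assumption|].
  apply lorentz_mmul; [apply lorentz_Rz | apply lorentz_ladj, HA].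
Qed.

Lemma rot_mx_shift A b th p : lorentz_mx A ->
  vadd (mapp (rot_mx A th) p) (rot_shift A b th) =
  vadd (mapp A (rotz th (mapp (ladj A) (vsub p b)))) b.
Proof.
  intros HA. unfold rot_shift, rot_mx. rewrite rotz_Rz, !mapp_mmul, !mapp_sub.
  apply V3_ext; simpl; ring.
Qed.

Lemma lprod_affine A b x y : lorentz_mx A ->
  lprod (vadd (mapp A x) b) y = lprod x (mapp (ladj A) y) + lprod b y.
Proof. intros HA. rewrite lprod_addl, lprod_mapp_ladj by exact HA. reflexivity. Qed.

Lemma vscale_eq_unit_timelike P K N w : P <> 0 -> lprod N N = -1 ->
  vscale P N = vscale K w -> K <> 0 /\ w = vscale (P / K) N.
Proof.
  intros HP HN E.
  assert (HK : K <> 0).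
  { intros ->. assert (N = mkV3 0 0 0).
    { apply V3_ext; [apply (f_equal vx) in E | apply (f_equal vy) in E | apply (f_equal vz) in E];
        simpl in E |- *; apply (Rmult_eq_reg_l P); lra. }
    subst N. unfold lprod in HN; simpl in HN. lra. }
  split; [exact HK|].
  apply V3_ext; [apply (f_equal vx) in E | apply (f_equal vy) in E | apply (f_equal vz) in E];
    simpl in E |- *; apply (Rmult_eq_reg_l K); auto; rewrite <- E; field; exact HK.
Qed.

Lemma rigid_motion_mx M t : lorentz_mx M -> rigid_motion (fun p => vadd (mapp M p) t).
Proof.
  intros HM. exists (mapp M), t. split; [|reflexivity].
  split; [exact (mapp_add M) | split; [exact (mapp_scale M) | exact HM]].
Qed.

Lemma maps_onto_of_comp (Phi Psi : V3 -> V3) (Z L : V3 -> Prop) :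
  maps_onto Phi Z L -> maps_onto (fun q => Psi (Phi q)) Z Z -> maps_onto Psi L Z.
Proof.
  intros [HPhiZ HPhiL] [HPP HPPon]. split.
  - intros p Lp. destruct (HPhiL p Lp) as [q [Zq <-]]. apply HPP, Zq.
  - intros r Zr. destruct (HPPon r Zr) as [q [Zq <-]].
    exists (Phi q); split; [apply HPhiZ, Zq | reflexivity].
Qed.

Lemma maps_onto_ext (f g : V3 -> V3) (Z L : V3 -> Prop) :
  (forall x, f x = g x) -> maps_onto f Z L -> maps_onto g Z L.
Proof.
  intros Hfg [HZ HL]. split.
  - intros p Zp. rewrite <- Hfg. apply HZ, Zp.
  - intros q Lq. destruct (HL q Lq) as [p [Zp <-]]. exists p. split; [exact Zp | symmetry; apply Hfg].
Qed.

Lemma maps_onto_z_axis_flip s z0 : s * s = 1 ->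
  maps_onto (fun q => mapp (time_flip s) (vsub q (vscale z0 e3))) z_axis z_axis.
Proof.
  intros Hs. split.
  - intros q [Hx Hy]. split; simpl; rewrite Hx, Hy; ring.
  - intros r [Hx Hy]. exists (vadd (mapp (time_flip s) r) (vscale z0 e3)). split.
    + split; simpl; rewrite Hx, Hy; ring.
    + rewrite <- (time_flipK s Hs r) at 2. f_equal. apply V3_ext; simpl; ring.
Qed.

Section RotationalSurface.

Variables (alpha : R) (a : V3) (S : V3 -> Prop) (A : M3) (b : V3).
Hypotheses (Halpha : alpha <> 0) (HA : lorentz_mx A) (HS : spacelike_surface S).
Hypothesis Hinv : forall th q, S (vadd (mapp A q) b) -> S (vadd (mapp A (rotz th q)) b).
Hypothesis Hden : forall p, S p -> lprod p a <> 0.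
Hypothesis HH : forall D X, chart S D X -> forall u v N, D u v ->
  unit_timelike_normal X u v N -> mean_curv X u v N = alpha * lprod N a / lprod (X u v) a.

Lemma rot_invariant_affine th p : S p -> S (vadd (mapp (rot_mx A th) p) (rot_shift A b th)).
Proof.
  intros Sp. rewrite rot_mx_shift by exact HA. apply Hinv.
  rewrite mapp_ladjK by exact HA.
  replace (vadd (vsub p b) b) with p by (apply V3_ext; simpl; ring). exact Sp.
Qed.

Lemma chart_rot D X th : chart S D X -> chart S D (aff (rot_mx A th) (rot_shift A b th) X).
Proof.
  intros HX. apply (chart_aff S D X _ _ HX (ladj (rot_mx A th))).
  - apply ladjK, lorentz_rot_mx, HA.
  - intros p; apply rot_invariant_affine.
Qed.

(* as H is invariant under rigid motions, so is [<N, a> / <p, a> = H / alpha] under the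
   rotations about the axis *)
Lemma ratio_rot_invariant D X u v N th : chart S D X -> D u v -> unit_timelike_normal X u v N ->
  lprod N a * lprod (vadd (mapp (rot_mx A th) (X u v)) (rot_shift A b th)) a =
  lprod (mapp (rot_mx A th) N) a * lprod (X u v) a.
Proof.
  intros HX Huv HN.
  pose proof (lorentz_rot_mx A th HA) as HR.
  assert (E := HH D _ (chart_rot D X th HX) u v _ Huv
                 (unit_timelike_normal_aff S D X _ _ HX HR u v N Huv HN)).
  rewrite (mean_curv_aff S D X _ _ HX HR u v N Huv), (HH D X HX u v N Huv HN) in E.
  unfold aff in E.
  assert (P0 := Hden _ (chart_in_S S D X u v HX Huv)).
  assert (P1 := Hden _ (rot_invariant_affine th _ (chart_in_S S D X u v HX Huv))).
  set (P := lprod (X u v) a) in *.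
  set (P' := lprod (vadd (mapp (rot_mx A th) (X u v)) (rot_shift A b th)) a) in *.
  replace (lprod N a * P') with (alpha * lprod N a / P * (P * P') / alpha) by (field; auto).
  rewrite E. field; auto.
Qed.

Hypothesis Ha : timelike a.

Let a' := mapp (ladj A) a.
(* the point of the axis [{A (0, 0, z) + b}] with [<C, a> = 0] *)
Let C := vadd b (vscale (lprod b a / vz a') (mapp A e3)).

(* [a] is not parallel to the axis *)
Hypothesis Hoff : 0 < vx a' ^ 2 + vy a' ^ 2.

Lemma normal_radial D X u v N : chart S D X -> D u v -> unit_timelike_normal X u v N ->
  vscale (lprod (X u v) a) N = vscale (lprod N a) (vsub (X u v) C).
Proof.
  intros HX Huv HN.
  assert (Ha'3 : vz a' <> 0).
  { intros E. assert (Hneg : lprod a' a' < 0) by (unfold a'; rewrite lorentz_ladj; assumption).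
    unfold lprod in Hneg. rewrite E in Hneg. nra. }
  set (p := X u v) in *.
  set (n := mapp (ladj A) N); set (q := mapp (ladj A) (vsub p b)).
  assert (EN : N = mapp A n) by (unfold n; rewrite mapp_ladjK; auto).
  assert (Ep : p = vadd (mapp A q) b)
    by (unfold q; rewrite mapp_ladjK by assumption; apply V3_ext; simpl; ring).
  assert (Hrot : forall th, lprod n a' * (lprod (mapp (Rz th) q) a' + lprod b a) =
                            lprod (mapp (Rz th) n) a' * (lprod q a' + lprod b a)).
  { intros th. assert (E := ratio_rot_invariant D X u v N th HX Huv HN).
    fold p in E. rewrite rot_mx_shift, lprod_affine in E by assumption. fold q a' in E.
    rewrite EN in E. unfold rot_mx in E. rewrite !mapp_mmul, ladjK, !lprod_mapp_ladj in E by assumption.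
    rewrite Ep, lprod_affine in E by assumption. fold a' in E. rewrite <- rotz_Rz. exact E. }
  assert (Radial := rot_invariant_ratio_radial n q a' (lprod b a) Hoff Ha'3 Hrot).
  rewrite Ep at 1. rewrite EN, lprod_affine, lprod_mapp_ladj by assumption. fold a'.
  rewrite <- mapp_scale, Radial, mapp_scale. f_equal.
  unfold C. rewrite Ep, mapp_sub, mapp_scale. apply V3_ext; simpl; ring.
Qed.

Lemma radial_tangent D X u v : chart S D X -> D u v ->
  lprod (vsub (X u v) C) (Xu X u v) = 0 /\ lprod (vsub (X u v) C) (Xv X u v) = 0 /\
  ldist2 C (X u v) < 0.
Proof.
  intros HX Huv.
  destruct (unit_timelike_normal_exists S D X u v HS HX Huv) as [N HN].
  destruct (vscale_eq_unit_timelike _ _ N _ (Hden _ (chart_in_S S D X u v HX Huv)) (proj1 HN)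
              (normal_radial D X u v N HX Huv HN)) as [HK Hw].
  destruct HN as [HNN [HNu HNv]].
  unfold ldist2. rewrite Hw, !lprod_scalel, lprod_scaler, HNu, HNv, HNN.
  assert (Hr : lprod (X u v) a / lprod N a <> 0).
  { unfold Rdiv; apply Rmult_integral_contrapositive_currified;
      [apply Hden, (chart_in_S S D X u v HX Huv) | apply Rinv_neq_0_compat, HK]. }
  apply Rsqr_pos_lt in Hr. unfold Rsqr in Hr. repeat split; lra.
Qed.

Lemma ldist2_neg p : S p -> ldist2 C p < 0.
Proof.
  intros Sp. destruct (proj1 HS p Sp) as [D [X [W [HX [_ [Wp Hcov]]]]]].
  destruct (Hcov p Sp Wp) as [u [v [Huv <-]]]. apply (radial_tangent D X u v HX Huv).
Qed.

Lemma ldist2_const : connected3 S -> exists m, 0 < m /\ forall p, S p -> ldist2 C p = - m ^ 2.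
Proof.
  intros Hconn.
  assert (Hloc := ldist2_locally_const S C
                    (fun D X u v HX Huv => let (H1, H2) := radial_tangent D X u v HX Huv in
                                           conj H1 (proj1 H2)) (proj1 HS)).
  destruct (classic (exists p0, S p0)) as [[p0 Sp0] | Hempty].
  - pose proof (ldist2_neg p0 Sp0).
    exists (sqrt (- ldist2 C p0)). split; [apply sqrt_lt_R0; lra|].
    intros p Sp. rewrite pow2_sqrt by lra.
    rewrite (connected3_locally_const S (ldist2 C) Hconn Hloc p0 p Sp0 Sp). ring.
  - exists 1. split; [lra|]. intros p Sp. exfalso. apply Hempty. exists p; exact Sp.
Qed.

Lemma time_sign : connected3 S ->
  exists s, s * s = 1 /\ forall p, S p -> 0 < s * vz (mapp (ladj A) (vsub p C)).
Proof.
  intros Hconn. apply (connected3_sign S _ (mx_bound (ladj A)) Hconn (mx_bound_gt0 _)).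
  - intros p q. eapply Rle_trans; [apply (edist3_ge_coords _ (mapp (ladj A) (vsub p C)))|].
    rewrite <- (edist3_vsub_r q p C). apply edist3_mapp.
  - intros p Sp E. pose proof (ldist2_neg p Sp) as Hneg.
    unfold ldist2 in Hneg. rewrite <- (lorentz_ladj A HA) in Hneg.
    unfold lprod in Hneg. rewrite E in Hneg. nra.
Qed.

Lemma rotational_surface_hyperbolic c d : connected3 S ->
  maps_onto (fun q => vadd (mapp A q) b) z_axis (on_line c d) ->
  exists Psi m, rigid_motion Psi /\ maps_onto Psi (on_line c d) z_axis /\
    0 < m /\ forall p, S p -> hyperbolic_plane m (Psi p).
Proof.
  intros Hconn Hon.
  destruct (ldist2_const Hconn) as [m [Hm Hdist]].
  destruct (time_sign Hconn) as [s [Hs Hsign]].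
  set (M := mmul (time_flip s) (ladj A)).
  assert (HM : lorentz_mx M) by (apply lorentz_mmul; [apply lorentz_time_flip | apply lorentz_ladj]; assumption).
  assert (HPsi : forall p, vadd (mapp M p) (vscale (-1) (mapp M C)) = mapp M (vsub p C))
    by (intros p; apply V3_ext; simpl; ring).
  exists (fun p => vadd (mapp M p) (vscale (-1) (mapp M C))), m.
  split; [apply rigid_motion_mx, HM|]. split; [|split; [exact Hm|]].
  - apply (maps_onto_of_comp _ _ _ _ Hon).
    apply (maps_onto_ext (fun q => mapp (time_flip s) (vsub q (vscale (lprod b a / vz a') e3)))).
    + intros q. rewrite HPsi. unfold M, C. rewrite mapp_mmul. f_equal.
      rewrite <- (ladjK A HA (vsub q _)). f_equal. apply V3_ext; simpl; ring.
    + apply maps_onto_z_axis_flip, Hs.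
  - intros p Sp. rewrite HPsi. split.
    + rewrite HM. apply Hdist, Sp.
    + pose proof (Hsign p Sp). unfold M. rewrite mapp_mmul.
      set (w := mapp (ladj A) (vsub p C)) in *. clearbody w. simpl. lra.
Qed.

End RotationalSurface.

Lemma parallel_of_axis A b c d a : lorentz_mx A ->
  (forall q, z_axis q -> on_line c d (vadd (mapp A q) b)) ->
  vx (mapp (ladj A) a) = 0 -> vy (mapp (ladj A) a) = 0 -> parallel d a.
Proof.
  intros HA Hon Hx Hy.
  destruct (Hon (mkV3 0 0 0)) as [t0 Ht0]; [split; reflexivity|].
  destruct (Hon e3) as [t1 Ht1]; [split; reflexivity|].
  assert (Ea : a = vscale (vz (mapp (ladj A) a)) (mapp A e3)).
  { rewrite <- mapp_scale, <- (mapp_ladjK A HA a) at 1. f_equal.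
    revert Hx Hy. generalize (mapp (ladj A) a) as a'.
    intros [x y z] Hx Hy; simpl in *; subst; apply V3_ext; simpl; ring. }
  assert (Ee3 : mapp A e3 = vsub (vadd (mapp A e3) b) (vadd (mapp A (mkV3 0 0 0)) b))
    by (rewrite mapp_zero; apply V3_ext; simpl; ring).
  exists (vz (mapp (ladj A) a) * (t1 - t0)).
  rewrite Ea at 1. rewrite Ee3, Ht0, Ht1. apply V3_ext; simpl; ring.
Qed.

Theorem proposition3p1
  (alpha : R) (a : V3) (S : V3 -> Prop) (c d : V3)
  (Halpha : alpha <> 0)
  (Ha : timelike a)
  (Hd : timelike d)
  (HS : spacelike_surface S)
  (Hconn : connected3 S)
  (Hrot : rot_invariant S c d)
  (Hden : forall p, S p -> lprod p a <> 0)
  (HH : forall D X, chart S D X -> forall u v N, D u v ->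
          unit_timelike_normal X u v N ->
          mean_curv X u v N = alpha * lprod N a / lprod (X u v) a) :
  parallel d a \/
  exists Psi m, rigid_motion Psi /\ maps_onto Psi (on_line c d) z_axis /\
    0 < m /\ forall p, S p -> hyperbolic_plane m (Psi p).
Proof.
  destruct Hrot as [Phi [[A0 [b [HA0 HPhi]]] [Hon Hinv]]].
  destruct (lorentz_linear_mx A0 HA0) as [A [HA HA0A]].
  assert (HPhiA : forall q, Phi q = vadd (mapp A q) b) by (intros q; rewrite HPhi, HA0A; reflexivity).
  set (a' := mapp (ladj A) a).
  destruct (Rle_lt_dec (vx a' ^ 2 + vy a' ^ 2) 0) as [Hpar | Hoff].
  - left. pose proof (pow2_ge_0 (vx a')); pose proof (pow2_ge_0 (vy a')).
    apply (parallel_of_axis A b c); [exact HA | | fold a'; nra | fold a'; nra].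
    intros q Zq. rewrite <- HPhiA. apply Hon, Zq.
  - right. apply (rotational_surface_hyperbolic alpha a S A b); try assumption.
    + intros th q. rewrite <- !HPhiA. apply Hinv.
    + exact (maps_onto_ext _ _ _ _ HPhiA Hon).
Qed.
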